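(* Let $\mathbf{A},\mathbf{C}\in\mathbb{R}^{n\times n}$ be symmetric with $\mathbf{C}$ positive definite, let $s\in[1,n]$ be an integer, $k\in\{1,\dots,n\}$, $\theta\ge0$, and let $f(\mathbf{x})=h(\mathbf{x})/g(\mathbf{x})$ with $h(\mathbf{x})=\tfrac12\mathbf{x}^T\mathbf{A}\mathbf{x}$, $g(\mathbf{x})=\tfrac12\mathbf{x}^T\mathbf{C}\mathbf{x}$. Consider the decomposition algorithm: starting from $\mathbf{x}^0$ with $\|\mathbf{x}^0\|_0\le s$, at iteration $t$ choose (by any rule) a working set $B\subseteq\{1,\dots,n\}$ with $|B|=k$, set $N=\{1,\dots,n\}\setminus B$, set $\mathbf{x}^{t+1}_N=\mathbf{x}^t_N$ and let $\mathbf{x}^{t+1}_B$ be a global minimizer of $$\frac{h(\mathbf{x}_B,\mathbf{x}^t_N)+\tfrac{\theta}{2}\|\mathbf{x}_B-\mathbf{x}^t_B\|_2^2}{g(\mathbf{x}_B,\mathbf{x}^t_N)}\quad\text{s.t. }\|\mathbf{x}_B\|_0+\|\mathbf{x}^t_N\|_0\le s,$$ where $h(\mathbf{x}_B,\mathbf{x}_N)$, $g(\mathbf{x}_B,\mathbf{x}_N)$ denote $h$, $g$ evaluated at the vector whose $B$-coordinates are $\mathbf{x}_B$ and $N$-coordinates are $\mathbf{x}_N$. Assume the iterates satisfy $0<\|\mathbf{x}^t\|<\infty$ for all $t$. Then for all $t$, $$f(\mathbf{x}^{t+1})-f(\mathbf{x}^t)\le\frac{-\theta\|\mathbf{x}^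{t+1}-\mathbf{x}^t\|_2^2}{(\mathbf{x}^{t+1})^T\mathbf{C}\mathbf{x}^{t+1}}.$$
   Context: $\|\mathbf{x}\|_0$ is the number of nonzero entries of $\mathbf{x}$. *)

From HB Require Import structures.
From mathcomp Require Import all_boot all_order all_algebra.
Set Implicit Arguments. Unset Strict Implicit. Unset Printing Implicit Defensive.
Import Order.TTheory GRing.Theory Num.Theory.
Local Open Scope ring_scope.

Definition qform (R : comRingType) (n : nat) (M : 'M[R]_n) (x : 'cV[R]_n) : R :=
  (x^T *m M *m x) 0 0.

Definition symmetric_mx (R : comRingType) (n : nat) (M : 'M[R]_n) : Prop := M^T = M.

Definition posdef_mx (R : numDomainType) (n : nat) (M : 'M[R]_n) : Prop :=
  symmetric_mx M /\ forall x : 'cV[R]_n, x != 0 -> 0 < qform M x.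

Definition hq (R : numFieldType) (n : nat) (A : 'M[R]_n) (x : 'cV[R]_n) : R :=
  qform A x / 2.
Definition fq (R : numFieldType) (n : nat) (A C : 'M[R]_n) (x : 'cV[R]_n) : R :=
  hq A x / hq C x.

(* number of nonzero entries of x restricted to the index set S
   (so that nnz_on setT x = ||x||_0 and nnz_on B x = ||x_B||_0) *)
Definition nnz_on (R : ringType) (n : nat) (S : {set 'I_n}) (x : 'cV[R]_n) : nat :=
  #|[set i in S | x i 0 != 0]|.
Definition nnz (R : ringType) (n : nat) (x : 'cV[R]_n) : nat := nnz_on setT x.

Definition sqnorm_on (R : ringType) (n : nat) (S : {set 'I_n}) (x : 'cV[R]_n) : R :=
  \sum_(i in S) x i 0 ^+ 2.
Definition sqnorm (R : ringType) (n : nat) (x : 'cV[R]_n) : R := sqnorm_on setT x.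

(* feasible set of the subproblem at x^t with working set B (N = ~: B):
   y_N = x^t_N, ||y_B||_0 + ||x^t_N||_0 <= s, and y in the domain of the
   fractional objective (g(y) well defined, i.e. y != 0) *)
Definition sub_feasible (R : realFieldType) (n s : nat) (B : {set 'I_n})
  (xt y : 'cV[R]_n) : Prop :=
  (forall i, i \in ~: B -> y i 0 = xt i 0) /\
  (nnz_on B y + nnz_on (~: B) xt <= s)%N /\ y != 0.

Definition sub_obj (R : realFieldType) (n : nat) (A C : 'M[R]_n) (theta : R)
  (B : {set 'I_n}) (xt y : 'cV[R]_n) : R :=
  (hq A y + theta / 2 * sqnorm_on B (y - xt)) / hq C y.

Definition sub_argmin (R : realFieldType) (n s : nat) (A C : 'M[R]_n) (theta : R)
  (B : {set 'I_n}) (xt y : 'cV[R]_n) : Prop :=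
  sub_feasible s B xt y /\
  forall z, sub_feasible s B xt z -> sub_obj A C theta B xt y <= sub_obj A C theta B xt z.

(** The current iterate is itself feasible for its subproblem, where the
    proximal term vanishes and the objective equals [f].  Since the next iterate
    agrees with the current one off the working set, its proximal term is
    [theta/2 ||x^{t+1} - x^t||^2], so comparing the minimal value with the value
    at [x^t] gives the descent inequality. Feasibility of [x^t] rests on
    [||x^t||_0 <= s], which every iterate inherits from its subproblem. *)

From HB Require Import structures.
From mathcomp Require Import all_boot all_order all_algebra.
From mathcomp Require Import ring lra.
Import Order.TTheory GRing.Theory Num.Theory.
Local Open Scope ring_scope.

Lemma nnz_onID (R : ringType) (n : nat) (S : {set 'I_n}) (x : 'cV[R]_n) :
  (nnz_on S x + nnz_on (~: S) x)%N = nnz x.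
Proof.
rewrite /nnz /nnz_on -(cardsID S [set i in setT | x i 0 != 0]).
by congr addn; apply: eq_card => i; rewrite !inE // andbC.
Qed.

Lemma eq_nnz_on (R : ringType) (n : nat) (S : {set 'I_n}) (x y : 'cV[R]_n) :
  (forall i, i \in S -> x i 0 = y i 0) -> nnz_on S x = nnz_on S y.
Proof.
move=> eq_xy; apply: eq_card => i; rewrite !inE.
by case: (boolP (i \in S)) => //= /eq_xy ->.
Qed.

Lemma sqnorm_on0 (R : ringType) (n : nat) (S : {set 'I_n}) :
  sqnorm_on S (0 : 'cV[R]_n) = 0.
Proof. by rewrite /sqnorm_on big1 // => i _; rewrite mxE expr0n. Qed.

Lemma sqnorm_on_supp (R : ringType) (n : nat) (S : {set 'I_n}) (d : 'cV[R]_n) :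
  (forall i, i \in ~: S -> d i 0 = 0) -> sqnorm_on S d = sqnorm d.
Proof.
move=> d_off; rewrite /sqnorm /sqnorm_on [RHS](big_setID S) setTI /=.
rewrite [X in _ + X]big1 ?addr0 // => i; rewrite !inE => /andP[i_notS _].
by rewrite d_off ?inE // expr0n.
Qed.

Section Subproblem.

Variables (R : realFieldType) (n s : nat) (A C : 'M[R]_n) (theta : R).
Variables (B : {set 'I_n}) (xt : 'cV[R]_n).

Lemma sub_feasible_self : (nnz xt <= s)%N -> xt != 0 -> sub_feasible s B xt xt.
Proof. by move=> sparse nz; rewrite /sub_feasible nnz_onID. Qed.

Lemma sub_feasible_nnz (y : 'cV[R]_n) : sub_feasible s B xt y -> (nnz y <= s)%N.
Proof.
move=> [y_off [y_sparse _]]; rewrite -(@nnz_onID _ _ B).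
by rewrite (@eq_nnz_on _ _ (~: B) y xt).
Qed.

Lemma sub_obj_self : sub_obj A C theta B xt xt = fq A C xt.
Proof. by rewrite /sub_obj subrr sqnorm_on0 mulr0 addr0. Qed.

Lemma sub_objE (y : 'cV[R]_n) : (forall i, i \in ~: B -> y i 0 = xt i 0) ->
  sub_obj A C theta B xt y = fq A C y + theta * sqnorm (y - xt) / qform C y.
Proof.
move=> y_off; rewrite /sub_obj mulrDl (@sqnorm_on_supp _ _ B); last first.
  by move=> i /y_off; rewrite !mxE => ->; rewrite subrr.
congr (_ + _); rewrite /hq.
move: (qform C y) (sqnorm _) => c q.
have [->|c_nz] := eqVneq c 0; first by rewrite mul0r !invr0 !mulr0.
by field.
Qed.

Lemma sub_argmin_descent (y : 'cV[R]_n) : (nnz xt <= s)%N -> xt != 0 ->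
  sub_argmin s A C theta B xt y ->
  fq A C y - fq A C xt <= - theta * sqnorm (y - xt) / qform C y.
Proof.
move=> sparse nz [[y_off _] y_min].
have := y_min _ (sub_feasible_self sparse nz).
by rewrite sub_obj_self sub_objE // !mulNr; lra.
Qed.

End Subproblem.

Theorem lemma2 (R : realFieldType) (n : nat) (A C : 'M[R]_n) (s k : nat) (theta : R)
  (x : nat -> 'cV[R]_n) (B : nat -> {set 'I_n}) :
  symmetric_mx A -> posdef_mx C ->
  (1 <= s <= n)%N -> (1 <= k <= n)%N -> 0 <= theta ->
  (nnz (x 0%N) <= s)%N ->
  (forall t, #|B t| = k) ->
  (forall t, sub_argmin s A C theta (B t) (x t) (x t.+1)) ->
  (forall t, x t != 0) ->
  forall t,
    fq A C (x t.+1) - fq A C (x t) <= - theta * sqnorm (x t.+1 - x t) / qform C (x t.+1).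
Proof.
move=> _ _ _ _ _ sparse0 _ step nz t.
have sparse : forall t, (nnz (x t) <= s)%N.
  by case=> [//|t']; have [feas _] := step t'; exact: sub_feasible_nnz feas.
exact: sub_argmin_descent (sparse t) (nz t) (step t).
Qed.
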